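(* Let $A$ be a complex $r$-matrix of order $n_1\times\cdots\times n_r$, with slices $A^{(j)}_t$. Then \[ \|A\|_r^r\leq\min_{k\in[r]}\ \max_{s\in[n_k]}\ \sum\Big\{|a_{i_1,\ldots,i_r}|\prod_{j\in[r]\setminus\{k\}}|A^{(j)}_{i_j}|_1 \ :\ i_k=s,\ i_j\in[n_j]\text{ for }j\neq k\Big\}. \]
   Context: An $r$-matrix of order $n_1\times\cdots\times n_r$ is a function on $[n_1]\times\cdots\times[n_r]$ with values $a_{i_1,\ldots,i_r}$. For $j\in[r]$ and $t\in[n_j]$, the slice $A^{(j)}_t$ is the $(r-1)$-matrix obtained by fixing $i_j=t$, and $|A^{(j)}_t|_1$ is the sum of the absolute values of its entries. The spectral $r$-norm is $\|A\|_r=\max\{|\sum a_{i_1,\ldots,i_r}\overline{x^{(1)}_{i_1}}\cdots\overline{x^{(r)}_{i_r}}|:\mathbf{x}^{(k)}\in\mathbb{C}^{n_k},\ |\mathbf{x}^{(k)}|_r=1\ \forall k\}$. *)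

From HB Require Import structures.
From mathcomp Require Import all_boot all_order all_algebra.
From mathcomp Require Import all_classical all_reals.
From mathcomp Require Import complex.
Set Implicit Arguments. Unset Strict Implicit. Unset Printing Implicit Defensive.
Import Order.TTheory GRing.Theory Num.Theory.
Local Open Scope ring_scope.
Local Open Scope classical_set_scope.

(* Multi-indices (i_1,...,i_r) with i_j in [n_j] (0-based: 'I_(n j)). *)
Definition midx (r : nat) (n : 'I_r -> nat) : finType :=
  {dffun forall j : 'I_r, 'I_(n j)}.

Definition rmatrix (R : realType) (r : nat) (n : 'I_r -> nat) :=
  midx n -> R[i].

(* |x|_r^r = sum_i |x_i|^r ; |x|_r = 1 iff this sum is 1. *)
Definition lrpow (R : realType) (r m : nat) (x : 'I_m -> R[i]) : R :=
  \sum_(i < m) ComplexField.Normc.normc (x i) ^+ r.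

Definition rform (R : realType) (r : nat) (n : 'I_r -> nat) (A : rmatrix R n)
  (x : forall k : 'I_r, 'I_(n k) -> R[i]) : R[i] :=
  \sum_(i : midx n) A i * \prod_(k < r) conjc (x k (i k)).

(* Spectral r-norm: max of |form| over all x^(k) with |x^(k)|_r = 1.
   The maximum is attained (compact unit spheres), so it equals the supremum. *)
Definition spec_norm (R : realType) (r : nat) (n : 'I_r -> nat)
  (A : rmatrix R n) : R :=
  sup [set ComplexField.Normc.normc (rform A x) | x in
         [set x : forall k : 'I_r, 'I_(n k) -> R[i] | forall k, lrpow r (x k) = 1]].

Definition slice_norm1 (R : realType) (r : nat) (n : 'I_r -> nat)
  (A : rmatrix R n) (j : 'I_r) (t : 'I_(n j)) : R :=
  \sum_(i : midx n | i j == t) ComplexField.Normc.normc (A i).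

Definition bound_ks (R : realType) (r : nat) (n : 'I_r -> nat)
  (A : rmatrix R n) (k : 'I_r) (s : 'I_(n k)) : R :=
  \sum_(i : midx n | i k == s)
     ComplexField.Normc.normc (A i) * \prod_(j < r | j != k) slice_norm1 A (i j).

(* max_{s in [n_k]} (values are nonnegative, and n_k >= 1, so 0 is a
   harmless neutral element). *)
Definition max_s (R : realType) (r : nat) (n : 'I_r -> nat)
  (A : rmatrix R n) (k : 'I_r) : R :=
  \big[Num.max/0]_(s < n k) bound_ks A s.

(* min over k in [r], of a nonnegative family, for r >= 1:
   the neutral element is the max of the family, which is one of its values,
   so this is exactly the minimum. *)
Definition min_ord (R : realType) (r : nat) (F : 'I_r -> R) : R :=
  \big[Num.min/ \big[Num.max/0]_(k < r) F k]_(k < r) F k.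

(** For [|x^(j)|_r = 1] put [y_j := |x^(j)|] and [B := sum_i |a_i| prod_j y_j(i_j)],
    so that [|form A x| <= B].  Fix [k], write [S_j] for the slice norms and
    [P(i) := prod_(j <> k) S_j(i_j)].  For each multi-index [i] with [a_i <> 0],
    AM-GM applied to the [r] numbers [(B / S_j(i_j)) y_j(i_j)^r] ([j <> k]) and
    [(P(i) / B^(r-1)) y_k(i_k)^r], whose weights multiply to [1], gives
    [r prod_j y_j(i_j) <= sum_j w_j(i) y_j(i_j)^r].  Multiplying by [|a_i|] and
    summing over [i], the slice sums collapse: each [j <> k] contributes [B]
    because [sum_t y_j(t)^r = 1], and the [k]-th term is at most
    [max_s A k / B^(r-1)].  Hence [r B <= (r-1) B + max_s A k / B^(r-1)],
    i.e. [B^r <= max_s A k]. *)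

From HB Require Import structures.
From mathcomp Require Import all_boot all_order all_algebra.
From mathcomp Require Import all_classical all_reals.
From mathcomp Require Import complex.
From mathcomp Require Import ring.
From mathcomp Require Import exp.
Import Order.TTheory GRing.Theory Num.Theory.
Local Open Scope ring_scope.

Set Implicit Arguments. Unset Strict Implicit. Unset Printing Implicit Defensive.
Local Notation normc := ComplexField.Normc.normc.

Lemma normc_ge0 (R : realType) (z : R[i]) : 0 <= normc z.
Proof. by case: z => a b; rewrite /= sqrtr_ge0. Qed.

Lemma normc_conj (R : realType) (z : R[i]) : normc (conjc z) = normc z.
Proof. by case: z => a b; rewrite /= sqrrN. Qed.

Lemma normc_prod (R : realType) (I : finType) (F : I -> R[i]) :
  normc (\prod_i F i) = \prod_i normc (F i).
Proof.
apply: (big_morph (fun z : R[i] => normc z)).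
- exact: ComplexField.Normc.normcM.
- exact: ComplexField.Normc.normc1.
Qed.

Lemma normc_sum_le (R : realType) (I : finType) (F : I -> R[i]) :
  normc (\sum_i F i) <= \sum_i normc (F i).
Proof.
apply: (big_ind2 (fun (z : R[i]) (v : R) => normc z <= v)) => //.
- by rewrite ComplexField.Normc.normc0.
- by move=> x1 x2 y1 y2 h1 h2; apply: le_trans (le_normcD _ _) (lerD h1 h2).
Qed.

Lemma AGM_expn (R : realType) (r : nat) (E : 'I_r -> R) (z : R) :
  (0 < r)%N -> (forall j, 0 <= E j) -> 0 <= z -> z ^+ r = \prod_j E j ->
  r%:R * z <= \sum_j E j.
Proof.
move=> r_gt0 E_ge0 z_ge0 zE.
have [+ _] := leif_AGM (A := predT) (fun i _ => E_ge0 i).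
rewrite cardT size_enum_ord -zE => zE_le.
have r_neq0 : r%:R != 0 :> R by rewrite pnatr_eq0 -lt0n.
rewrite -(ler_pXn2r r_gt0) ?nnegrE ?mulr_ge0 ?ler0n ?sumr_ge0 //.
rewrite -[X in _ <= X ^+ r](divfK r_neq0) !exprMn mulrC.
by rewrite ler_wpM2r ?exprn_ge0 ?ler0n // -exprMn.
Qed.

Lemma sup_expn_le (R : realType) (r : nat) (T : set R) (M : R) :
  (0 < r)%N -> 0 <= M -> (forall e, T e -> 0 <= e /\ e ^+ r <= M) ->
  sup T ^+ r <= M.
Proof.
move=> r_gt0 M_ge0 hT.
have [[e Te]|T0] := pselect (T !=set0)%classic; last first.
  rewrite (_ : T = set0) ?sup0 ?expr0n ?gtn_eqF //.
  by apply/seteqP; split=> e // Te; apply: T0; exists e.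
pose m := M `^ r%:R^-1.
have m_ge0 : 0 <= m by exact: powR_ge0.
have mE : m ^+ r = M.
  rewrite -powR_mulrn // -powRrM mulVf ?powRr1 //.
  by rewrite pnatr_eq0 -lt0n.
have ub_m : ubound T m.
  move=> e' /hT [e'_ge0]; rewrite -mE.
  by rewrite (ler_pXn2r r_gt0) ?nnegrE.
have sup_ge0 : 0 <= sup T.
  by apply: le_trans (ub_le_sup _ Te); [case: (hT e Te) | exists m].
by rewrite -mE (ler_pXn2r r_gt0) ?nnegrE //; apply: ge_sup => //; exists e.
Qed.

Lemma min_ord_ge (R : realType) (r : nat) (F : 'I_r -> R) (e : R) :
  (0 < r)%N -> (forall k, e <= F k) -> e <= min_ord F.
Proof.
move=> r_gt0 eF; apply: (big_ind (fun v => e <= v)) => [||k _]; last exact: eF.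
- apply: le_trans (eF (Ordinal r_gt0)) _.
  by rewrite (bigD1 (Ordinal r_gt0)) //= le_max lexx.
- by move=> a b ha hb; rewrite le_min ha hb.
Qed.

Section SliceNorms.
Variables (R : realType) (r : nat) (n : 'I_r -> nat) (A : rmatrix R n).

Lemma slice_norm1_ge0 j (t : 'I_(n j)) : 0 <= slice_norm1 A t.
Proof. by apply: sumr_ge0 => i _; exact: normc_ge0. Qed.

Lemma normc_le_slice_norm1 (i : midx n) j : normc (A i) <= slice_norm1 A (i j).
Proof.
rewrite /slice_norm1 (bigD1 i) //= lerDl.
by apply: sumr_ge0 => ? _; exact: normc_ge0.
Qed.

Lemma max_s_ge0 k : 0 <= max_s A k.
Proof.
apply: (big_ind (fun v => 0 <= v)) => // [x y hx hy|s _].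
  by rewrite le_max hx.
apply: sumr_ge0 => i _; rewrite mulr_ge0 ?normc_ge0 //.
by apply: prodr_ge0 => j _; exact: slice_norm1_ge0.
Qed.

Lemma bound_ks_le_max_s k (s : 'I_(n k)) : bound_ks A s <= max_s A k.
Proof. by rewrite /max_s (bigD1 s) //= le_max lexx. Qed.

Lemma normc_rform_le (x : forall k : 'I_r, 'I_(n k) -> R[i]) :
  normc (rform A x) <= \sum_(i : midx n) normc (A i) * \prod_j normc (x j (i j)).
Proof.
rewrite /rform; apply: le_trans (normc_sum_le _) _; apply: ler_sum => i _.
rewrite ComplexField.Normc.normcM normc_prod.
by under eq_bigr do rewrite normc_conj.
Qed.

End SliceNorms.

Section WeightedForm.
Local Unset Implicit Arguments.
Variables (R : realType) (r : nat) (n : 'I_r -> nat) (A : rmatrix R n).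
Hypothesis r_gt0 : (0 < r)%N.
Variable y : forall j, 'I_(n j) -> R.
Hypothesis y_ge0 : forall j t, 0 <= y j t.
Hypothesis y_unit : forall j, \sum_t y j t ^+ r = 1.
Variable k : 'I_r.

Local Notation a i := (normc (A i)).
Local Notation S j t := (@slice_norm1 _ _ _ A j t).

Let B := \sum_(i : midx n) a i * \prod_j y j (i j).
Let P (i : midx n) := \prod_(j < r | j != k) S j (i j).

Lemma weighted_form_ge0 : 0 <= B.
Proof.
apply: sumr_ge0 => i _; rewrite mulr_ge0 ?normc_ge0 //.
by apply: prodr_ge0 => j _.
Qed.

Section PositiveForm.
Hypothesis B_gt0 : 0 < B.

Let w (j : 'I_r) (i : midx n) : R :=
  if j == k then P i / B ^+ r.-1 else B / S j (i j).

Lemma weight_ge0 j i : 0 <= w j i.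
Proof.
have B_ge0 := ltW B_gt0.
rewrite /w; case: eqP => _; rewrite divr_ge0 ?slice_norm1_ge0 ?exprn_ge0 //.
by apply: prodr_ge0 => l _; exact: slice_norm1_ge0.
Qed.

Lemma prod_weight (i : midx n) : a i != 0 -> \prod_j w j i = 1.
Proof.
move=> ai_neq0.
have S_neq0 l : S l (i l) != 0.
  rewrite gt_eqF // (lt_le_trans _ (normc_le_slice_norm1 A i l)) //.
  by rewrite lt_def ai_neq0 normc_ge0.
rewrite (bigD1 k) //= /w eqxx.
rewrite (eq_bigr (fun j => B / S j (i j))); last by move=> j /negbTE ->.
rewrite big_split /= prodfV -/(P i).
have -> : \prod_(j < r | j != k) B = B ^+ r.-1.
  by rewrite (eq_bigl (mem (predC1 k))) // prodr_const cardC1 card_ord.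
have P_neq0 : P i != 0 by rewrite prodf_seq_neq0; apply/allP => l _; apply/implyP.
have B_neq0 : B ^+ r.-1 != 0 by rewrite expf_neq0 // gt_eqF.
by field; rewrite P_neq0 B_neq0.
Qed.

Lemma weighted_AGM (i : midx n) :
  r%:R * (a i * \prod_j y j (i j)) <= \sum_j a i * w j i * y j (i j) ^+ r.
Proof.
have [ai0|ai_neq0] := eqVneq (a i) 0.
  rewrite ai0 mul0r mulr0; apply: sumr_ge0 => j _.
  by rewrite !mul0r.
have -> : \sum_j a i * w j i * y j (i j) ^+ r = a i * \sum_j w j i * y j (i j) ^+ r.
  by rewrite mulr_sumr; apply: eq_bigr => j _; rewrite mulrA.
rewrite mulrCA ler_wpM2l ?normc_ge0 //.
apply: AGM_expn => //.
- by move=> j; rewrite mulr_ge0 ?weight_ge0 ?exprn_ge0.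
- exact: prodr_ge0.
by rewrite big_split /= prod_weight // mul1r prodrXl.
Qed.

Lemma weighted_sum_center :
  \sum_i a i * w k i * y k (i k) ^+ r <= max_s A k / B ^+ r.-1.
Proof.
have -> : \sum_i a i * w k i * y k (i k) ^+ r =
    (\sum_i a i * P i * y k (i k) ^+ r) / B ^+ r.-1.
  by rewrite mulr_suml; apply: eq_bigr => i _; rewrite /w eqxx; ring.
rewrite ler_wpM2r ?invr_ge0 ?exprn_ge0 ?weighted_form_ge0 //.
rewrite (partition_big (fun i : midx n => i k) xpredT) //=.
apply: (@le_trans _ _ (\sum_s max_s A k * y k s ^+ r)).
  apply: ler_sum => s _.
  rewrite (eq_bigr (fun i => a i * P i * y k s ^+ r)) => [|i /eqP <-] //.
  by rewrite -mulr_suml ler_wpM2r ?exprn_ge0 ?bound_ks_le_max_s.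
by rewrite -mulr_sumr y_unit mulr1.
Qed.

Lemma weighted_sum_off_center j : j != k ->
  \sum_i a i * w j i * y j (i j) ^+ r <= B.
Proof.
move=> jk; rewrite /w (negbTE jk).
rewrite (partition_big (fun i : midx n => i j) xpredT) //=.
rewrite -[X in _ <= X]mulr1 -(y_unit j) mulr_sumr; apply: ler_sum => t _.
rewrite (eq_bigr (fun i => a i * (B / S j t * y j t ^+ r))) => [|i /eqP <-];
  last by rewrite !mulrA.
rewrite -mulr_suml -/(S j t).
have [S0|S_neq0] := eqVneq (S j t) 0.
  by rewrite S0 mul0r mulr_ge0 ?exprn_ge0 ?weighted_form_ge0.
by rewrite mulrA [S j t * _]mulrC divfK.
Qed.

Lemma positive_weighted_form_expn_le : B ^+ r <= max_s A k.
Proof.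
have sum_le : r%:R * B <= max_s A k / B ^+ r.-1 + r.-1%:R * B.
  apply: (@le_trans _ _ (\sum_j \sum_i a i * w j i * y j (i j) ^+ r)).
    by rewrite exchange_big /= mulr_sumr; apply: ler_sum => i _; exact: weighted_AGM.
  rewrite (bigD1 k) //= lerD ?weighted_sum_center //.
  apply: le_trans (ler_sum _ weighted_sum_off_center) _.
  by rewrite (eq_bigl (mem (predC1 k))) // sumr_const cardC1 card_ord mulr_natl.
rewrite -{1}(prednK r_gt0) -natr1 mulrDl mul1r addrC lerD2r in sum_le.
rewrite ler_pdivlMr ?exprn_gt0 // in sum_le.
by rewrite -[r in B ^+ r](prednK r_gt0) exprS.
Qed.

End PositiveForm.

Lemma weighted_form_expn_le_max_s : B ^+ r <= max_s A k.
Proof.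
have [B0|B_neq0] := eqVneq B 0.
  by rewrite B0 expr0n gtn_eqF // max_s_ge0.
by apply: positive_weighted_form_expn_le; rewrite lt_def B_neq0 weighted_form_ge0.
Qed.

End WeightedForm.

Theorem theorem17 (R : realType) (r : nat) (n : 'I_r -> nat)
  (hr : (0 < r)%N) (hn : forall j, (0 < n j)%N) (A : rmatrix R n) :
  spec_norm A ^+ r <= min_ord (fun k : 'I_r => max_s A k).
Proof.
apply: sup_expn_le => //.
  by apply: min_ord_ge => // k; exact: max_s_ge0.
move=> _ [x x_unit <-]; split; first exact: normc_ge0.
pose y j t := normc (x j t).
have y_ge0 j t : 0 <= y j t by exact: normc_ge0.
pose B := \sum_(i : midx n) normc (A i) * \prod_j y j (i j).
apply: (@le_trans _ _ (B ^+ r)).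
  rewrite (ler_pXn2r hr) ?nnegrE ?normc_ge0 //; first exact: (normc_rform_le A x).
  by apply: sumr_ge0 => i _; rewrite mulr_ge0 ?normc_ge0 ?prodr_ge0.
apply: min_ord_ge => // k.
exact: (weighted_form_expn_le_max_s _ _ _ A hr y y_ge0 x_unit k).
Qed.
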